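(* Let $\varepsilon>0$. The equilibrium point $$\overline{\mathbf x_0}=\Big(-\frac{a}{a_1},-\frac{b}{a_2},-\frac{c}{a_3}\Big)$$ of the $\varepsilon$-revised system $$\dot{\mathbf x}=\mathbf x\times\mathbf m(\mathbf x)+\varepsilon[(\mathbf x\times\mathbf m(\mathbf x))\times\mathbf m(\mathbf x)]$$ is Lyapunov stable.
   Context: Fix constants $0<a_1<a_2<a_3$ and $a,b,c\in\mathbb R$. Set $\mathbf m(\mathbf x)=(a_1x^1+a,\ a_2x^2+b,\ a_3x^3+c)$; $\times$ is the cross product in $\mathbb R^3$. Note that $\mathbf m(\overline{\mathbf x_0})=\mathbf 0$. *)

From Stdlib Require Import Reals Lra.
Open Scope R_scope.

Definition vec3 := (R * R * R)%type.

Definition v1 (u : vec3) : R := fst (fst u).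
Definition v2 (u : vec3) : R := snd (fst u).
Definition v3 (u : vec3) : R := snd u.

Definition vadd (u v : vec3) : vec3 := (v1 u + v1 v, v2 u + v2 v, v3 u + v3 v).
Definition vsub (u v : vec3) : vec3 := (v1 u - v1 v, v2 u - v2 v, v3 u - v3 v).
Definition vscale (k : R) (u : vec3) : vec3 := (k * v1 u, k * v2 u, k * v3 u).

Definition vnorm (u : vec3) : R := sqrt (v1 u ^ 2 + v2 u ^ 2 + v3 u ^ 2).

Definition cross (u v : vec3) : vec3 :=
  (v2 u * v3 v - v3 u * v2 v,
   v3 u * v1 v - v1 u * v3 v,
   v1 u * v2 v - v2 u * v1 v).

Definition mvec (a1 a2 a3 a b c : R) (x : vec3) : vec3 :=
  (a1 * v1 x + a, a2 * v2 x + b, a3 * v3 x + c).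

Definition revised_field (a1 a2 a3 a b c eps : R) (x : vec3) : vec3 :=
  let m := mvec a1 a2 a3 a b c x in
  vadd (cross x m) (vscale eps (cross (cross x m) m)).

Definition is_solution_on (F : vec3 -> vec3) (T : R) (x : R -> vec3) : Prop :=
  forall t, 0 <= t < T ->
    derivable_pt_lim (fun s => v1 (x s)) t (v1 (F (x t))) /\
    derivable_pt_lim (fun s => v2 (x s)) t (v2 (F (x t))) /\
    derivable_pt_lim (fun s => v3 (x s)) t (v3 (F (x t))).

(* Lyapunov stability of the point p for x' = F(x): for every e > 0 there is
   d > 0 such that every solution starting within d of p stays within e of p
   for all forward times at which it is defined (on any interval [0,T); in
   particular this covers solutions defined on all of [0, +oo)). *)
Definition lyapunov_stable (F : vec3 -> vec3) (p : vec3) : Prop :=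
  forall e, 0 < e -> exists d, 0 < d /\
    forall (T : R) (x : R -> vec3), is_solution_on F T x ->
      vnorm (vsub (x 0) p) < d ->
      forall t, 0 <= t < T -> vnorm (vsub (x t) p) < e.

(** The point p is the zero of m, and m(x) is the gradient of
    E(x) = a1 (x1 - p1)^2 + a2 (x2 - p2)^2 + a3 (x3 - p3)^2 up to a factor 2.
    Both terms of the revised field are cross products with m(x) as a factor,
    hence orthogonal to m(x), so E is a first integral. As
    a1 |x - p|^2 <= E(x) <= a3 |x - p|^2, its level sets trap solutions in
    balls around p of comparable radii, which is Lyapunov stability. *)

From Stdlib Require Import Reals Lra.
Open Scope R_scope.

Definition dot (u v : vec3) : R := v1 u * v1 v + v2 u * v2 v + v3 u * v3 v.

Lemma dot_cross_r (u v : vec3) : dot v (cross u v) = 0.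
Proof. unfold dot, cross, v1, v2, v3; simpl; ring. Qed.

Lemma vnorm_sq (u : vec3) : vnorm u ^ 2 = v1 u ^ 2 + v2 u ^ 2 + v3 u ^ 2.
Proof. apply pow2_sqrt; nra. Qed.

Lemma vnorm_lt_of_sq_lt (u : vec3) (e : R) : 0 < e -> vnorm u ^ 2 < e ^ 2 -> vnorm u < e.
Proof.
  intros He Hu. assert (Hn : 0 <= vnorm u) by apply sqrt_pos. nra.
Qed.

Lemma derivable_pt_lim_scal_sq_shift (g : R -> R) (w q t l : R) :
  derivable_pt_lim g t l ->
  derivable_pt_lim (fun s => w * (g s - q) ^ 2) t (2 * (w * (g t - q)) * l).
Proof.
  intro Hg.
  assert (Hshift : derivable_pt_lim (fun s => g s - q) t (l - 0)).
  { apply (derivable_pt_lim_minus g (fun _ => q)); [exact Hg | apply derivable_pt_lim_const]. }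
  pose proof (derivable_pt_lim_comp _ _ _ _ _ Hshift (derivable_pt_lim_pow (g t - q) 2)) as Hsq.
  pose proof (derivable_pt_lim_scal _ w _ _ Hsq) as Hw.
  replace (2 * (w * (g t - q)) * l) with (w * (INR 2 * (g t - q) ^ Nat.pred 2 * (l - 0)))
    by (simpl; ring).
  exact Hw.
Qed.

Section WeightedEnergy.

Variables (w1 w2 w3 : R) (p : vec3).

Definition energy (y : vec3) : R :=
  w1 * (v1 y - v1 p) ^ 2 + w2 * (v2 y - v2 p) ^ 2 + w3 * (v3 y - v3 p) ^ 2.

Definition energy_grad (y : vec3) : vec3 :=
  (w1 * (v1 y - v1 p), w2 * (v2 y - v2 p), w3 * (v3 y - v3 p)).

Lemma derivable_pt_lim_energy (x : R -> vec3) (t : R) (y' : vec3) :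
  derivable_pt_lim (fun s => v1 (x s)) t (v1 y') ->
  derivable_pt_lim (fun s => v2 (x s)) t (v2 y') ->
  derivable_pt_lim (fun s => v3 (x s)) t (v3 y') ->
  derivable_pt_lim (fun s => energy (x s)) t (2 * dot (energy_grad (x t)) y').
Proof.
  intros D1 D2 D3.
  replace (2 * dot (energy_grad (x t)) y') with
    (2 * (w1 * (v1 (x t) - v1 p)) * v1 y' + 2 * (w2 * (v2 (x t) - v2 p)) * v2 y'
     + 2 * (w3 * (v3 (x t) - v3 p)) * v3 y')
    by (unfold dot, energy_grad, v1, v2, v3; simpl; ring).
  apply derivable_pt_lim_plus; [apply derivable_pt_lim_plus |];
    apply derivable_pt_lim_scal_sq_shift; assumption.
Qed.

Lemma energy_bounds (lo hi : R) (y : vec3) :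
  0 <= lo -> lo <= w1 <= hi -> lo <= w2 <= hi -> lo <= w3 <= hi ->
  lo * vnorm (vsub y p) ^ 2 <= energy y <= hi * vnorm (vsub y p) ^ 2.
Proof.
  intros Hlo H1 H2 H3. rewrite vnorm_sq. unfold energy, vsub, v1, v2, v3; simpl.
  pose proof (pow2_ge_0 (fst (fst y) - fst (fst p))).
  pose proof (pow2_ge_0 (snd (fst y) - snd (fst p))).
  pose proof (pow2_ge_0 (snd y - snd p)).
  split; nra.
Qed.

End WeightedEnergy.

Lemma eq_on_interval_of_derivative_zero (f : R -> R) (T : R) :
  (forall s, 0 <= s < T -> derivable_pt_lim f s 0) ->
  forall t, 0 <= t < T -> f t = f 0.
Proof.
  intros Hd t Ht.
  destruct (Req_dec t 0) as [-> | Ht0]; [reflexivity |].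
  destruct (MVT_cor2 f (fun _ => 0) 0 t) as [s [Hs _]]; [lra | | lra].
  intros s Hs. apply Hd. lra.
Qed.

Lemma energy_conserved (w1 w2 w3 : R) (p : vec3) (F : vec3 -> vec3) (T : R) (x : R -> vec3) :
  (forall y, dot (energy_grad w1 w2 w3 p y) (F y) = 0) ->
  is_solution_on F T x ->
  forall t, 0 <= t < T -> energy w1 w2 w3 p (x t) = energy w1 w2 w3 p (x 0).
Proof.
  intros Horth Hsol.
  apply (eq_on_interval_of_derivative_zero (fun s => energy w1 w2 w3 p (x s))).
  intros s Hs. destruct (Hsol s Hs) as [D1 [D2 D3]].
  rewrite <- (Rmult_0_r 2), <- (Horth (x s)).
  exact (derivable_pt_lim_energy w1 w2 w3 p x s _ D1 D2 D3).
Qed.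

Lemma lyapunov_stable_of_energy_first_integral (w1 w2 w3 lo hi : R) (p : vec3)
    (F : vec3 -> vec3) :
  0 < lo -> lo <= w1 <= hi -> lo <= w2 <= hi -> lo <= w3 <= hi ->
  (forall y, dot (energy_grad w1 w2 w3 p y) (F y) = 0) ->
  lyapunov_stable F p.
Proof.
  intros Hlo H1 H2 H3 Horth e He.
  assert (Hratio : 0 < lo / hi) by (apply Rdiv_lt_0_compat; lra).
  exists (e * sqrt (lo / hi)). split.
  { apply Rmult_lt_0_compat; [lra | apply sqrt_lt_R0; exact Hratio]. }
  intros T x Hsol H0 t Ht.
  apply vnorm_lt_of_sq_lt; [exact He |].
  assert (Hd2 : hi * (e * sqrt (lo / hi)) ^ 2 = lo * e ^ 2).
  { rewrite Rpow_mult_distr, pow2_sqrt by lra. field. lra. }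
  assert (Hstart : hi * vnorm (vsub (x 0) p) ^ 2 < lo * e ^ 2).
  { rewrite <- Hd2. assert (Hn : 0 <= vnorm (vsub (x 0) p)) by apply sqrt_pos.
    apply Rmult_lt_compat_l; [lra | nra]. }
  pose proof (energy_bounds w1 w2 w3 p lo hi (x t)) as Bt.
  pose proof (energy_bounds w1 w2 w3 p lo hi (x 0)) as B0.
  pose proof (energy_conserved w1 w2 w3 p F T x Horth Hsol t Ht) as Hcons.
  nra.
Qed.

Lemma mvec_energy_grad (a1 a2 a3 a b c : R) (y : vec3) :
  a1 <> 0 -> a2 <> 0 -> a3 <> 0 ->
  mvec a1 a2 a3 a b c y = energy_grad a1 a2 a3 (- a / a1, - b / a2, - c / a3) y.
Proof.
  intros H1 H2 H3. unfold mvec, energy_grad, v1, v2, v3; simpl.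
  f_equal; [f_equal |]; field; assumption.
Qed.

Lemma dot_mvec_revised_field (a1 a2 a3 a b c eps : R) (y : vec3) :
  dot (mvec a1 a2 a3 a b c y) (revised_field a1 a2 a3 a b c eps y) = 0.
Proof.
  unfold revised_field. set (m := mvec a1 a2 a3 a b c y).
  transitivity (dot m (cross y m) + eps * dot m (cross (cross y m) m)).
  - unfold dot, vadd, vscale, v1, v2, v3; simpl; ring.
  - rewrite !dot_cross_r. ring.
Qed.

Theorem theorem6p2 (a1 a2 a3 a b c eps : R) :
  0 < a1 -> a1 < a2 -> a2 < a3 -> 0 < eps ->
  lyapunov_stable (revised_field a1 a2 a3 a b c eps)
    (- a / a1, - b / a2, - c / a3).
Proof.
  intros h1 h2 h3 _.
  apply (lyapunov_stable_of_energy_first_integral a1 a2 a3 a1 a3); try lra.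
  intro y. rewrite <- mvec_energy_grad by lra.
  apply dot_mvec_revised_field.
Qed.
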